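(* Let $\omega_N$ be the vorticity of the SV approximation, with arbitrary parameters $\epsilon_N,m_N,a_N>0$. Let $C>0$ be a constant such that $\sum_{0<|k|\le N}|k|^{-2}\le C\log(N)$ for all $N\ge2$ (sum over $k\in\mathbb{Z}^2$). For $\alpha>0$ put \[ \beta_N=\alpha^2+8\epsilon_N^2m_N^2,\qquad \gamma_N=C\log(N). \] Then \[ \|e^{\alpha t|\nabla|}\omega_N(\cdot,t)\|_{L^2}^2\le\frac{\|\omega_N(\cdot,0)\|_{L^2}^2\,e^{\beta_Nt/\epsilon_N}}{1-\frac{\gamma_N\|\omega_N(\cdot,0)\|_{L^2}^2}{\beta_N}\big[e^{\beta_Nt/\epsilon_N}-1\big]} \] for all $0\le t<t^*$, where $t^*=\frac{\epsilon_N}{\beta_N}\log\Big(1+\frac{\beta_N}{\gamma_N\|\omega_N(\cdot,0)\|_{L^2}^2}\Big)$.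
   Context: Let $\mathbb{T}^2=\mathbb{R}^2/(2\pi\mathbb{Z})^2$. For $k=(k_1,k_2)\in\mathbb{Z}^2$ let $|k|$ denote the Euclidean norm and $|k|_\infty=\max(|k_1|,|k_2|)$. Fourier coefficients are $\hat f_k=(2\pi)^{-2}\int_{\mathbb{T}^2}f(x)e^{-ik\cdot x}\,dx$. $P_Nf:=\sum_{|k|_\infty\le N}\hat f_k e^{ik\cdot x}$. Convolution is $(K*f)(x)=\int_{\mathbb{T}^2}K(x-y)f(y)\,dy$, so $\widehat{(K*f)}_k=\widetilde K_k\hat f_k$ with $\widetilde K_k:=\int_{\mathbb{T}^2}K(x)e^{-ik\cdot x}dx$. $|\nabla|$ and $e^{\alpha|\nabla|}$ ($\alpha\in\mathbb{R}$) are the Fourier multipliers with symbols $|k|$ and $e^{\alpha|k|}$. For $v=(v^1,v^2)$, $\mathrm{curl}\,v=\partial_1v^2-\partial_2v^1$. Initial data: $u_0\in L^2(\mathbb{T}^2;\mathbb{R}^2)$ with $\operatorname{div}u_0=0$ in distributions and $\int u_0\,dx=0$; $\omega_0:=\mathrm{curl}\,u_0\in H^{-1}(\mathbb{T}^2)$. SV scheme: for integers $N\ge2$ fix parameters $\epsilon_N>0$, $m_N\ge0$, $1\le a_N\le N$, and: numbers $\hat R_k\in[0,1]$ with $\hat R_k=1$ for $|k|\le m_N$, $\hat R_k=0$ for $|k|>2m_N$; $R_{m_N}$ is the trigonometric polynomial with $\widetilde{(R_{m_N})}_k=\hat R_k$, and $Q_N$ is the Fourier multiplier with symbol $\hat Q_k:=1-\hat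 R_k$; $K_{a_N}$ is a trigonometric polynomial with $\widetilde{(K_{a_N})}_k=0$ unless $|k|_\infty\le a_N$ and $|\widetilde{(K_{a_N})}_k|\le1$. The SV approximation is the trigonometric polynomial field $u_N(x,t)=\sum_{0<|k|_\infty\le N}\hat u_k(t)e^{ik\cdot x}$, $k\cdot\hat u_k=0$, solving $\partial_tu_N+P_N(u_N\cdot\nabla u_N)+\nabla p_N=\epsilon_N\Delta(Q_Nu_N)$, $\operatorname{div}u_N=0$, $u_N(\cdot,0)=K_{a_N}*u_0$. Its vorticity $\omega_N:=\mathrm{curl}\,u_N$ solves $\partial_t\omega_N+P_N(u_N\cdot\nabla\omega_N)=\epsilon_N\Delta(Q_N\omega_N)$, $\omega_N(\cdot,0)=K_{a_N}*\omega_0$. *)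

From Stdlib Require Import Reals ZArith Lra Bool.
Open Scope R_scope.

Definition cpx := (R * R)%type.
Definition C0 : cpx := (0, 0).
Definition Ci : cpx := (0, 1).
Definition RtoC (r : R) : cpx := (r, 0).
Definition Cadd (z w : cpx) : cpx := (fst z + fst w, snd z + snd w).
Definition Copp (z : cpx) : cpx := (- fst z, - snd z).
Definition Cmul (z w : cpx) : cpx :=
  (fst z * fst w - snd z * snd w, fst z * snd w + snd z * fst w).
Definition Cscal (r : R) (z : cpx) : cpx := (r * fst z, r * snd z).
Definition Cconj (z : cpx) : cpx := (fst z, - snd z).
Definition Cnorm2 (z : cpx) : R := fst z ^ 2 + snd z ^ 2.

Definition mode := (Z * Z)%type.
Definition kneg (k : mode) : mode := (- fst k, - snd k)%Z.
Definition ksub (k p : mode) : mode := (fst k - fst p, snd k - snd p)%Z.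
Definition knorm2 (k : mode) : R := IZR (fst k * fst k + snd k * snd k).
Definition knorm (k : mode) : R := sqrt (knorm2 k).
Definition in_boxb (n : Z) (k : mode) : bool :=
  andb (Z.abs (fst k) <=? n)%Z (Z.abs (snd k) <=? n)%Z.

(** sum_{j=-n}^{n} f j *)
Definition sumZ (n : nat) (f : Z -> R) : R :=
  sum_f_R0 (fun i => f (Z.of_nat i - Z.of_nat n)%Z) (2 * n).
Definition box_sum (n : nat) (f : mode -> R) : R :=
  sumZ n (fun a => sumZ n (fun b => f (a, b))).
Definition Cbox_sum (n : nat) (f : mode -> cpx) : cpx :=
  (box_sum n (fun k => fst (f k)), box_sum n (fun k => snd (f k))).

(** sum_{k in Z^2, 0 < |k| <= n} |k|^{-2}  (|k| <= n implies |k|_oo <= n) *)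
Definition sum_inv_sq (n : nat) : R :=
  box_sum n (fun k =>
    if andb (0 <? fst k * fst k + snd k * snd k)%Z
            (fst k * fst k + snd k * snd k <=? Z.of_nat n * Z.of_nat n)%Z
    then / knorm2 k else 0).

(** * Vector fields given by Fourier coefficients: v k = (v^1_k, v^2_k) *)
Definition vfield := (mode -> cpx * cpx)%type.

(** Fourier coefficients of curl v = d1 v^2 - d2 v^1 :
    (curl v)^_k = i (k1 v^2_k - k2 v^1_k) *)
Definition curl_hat (v : vfield) (k : mode) : cpx :=
  Cmul Ci (Cadd (Cscal (IZR (fst k)) (snd (v k)))
                (Cscal (- IZR (snd k)) (fst (v k)))).

(** Fourier coefficient of component [comp] of (v . grad) v at mode k, for
    v supported in the box |k|_oo <= n:
    sum_{p+q=k} (sum_l v^l_p (i q_l)) v^comp_q . *)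
Definition adv_hat (n : nat) (v : vfield) (comp : cpx * cpx -> cpx)
  (k : mode) : cpx :=
  Cbox_sum n (fun p =>
    let q := ksub k p in
    Cmul (Cadd (Cmul (fst (v p)) (Cmul Ci (RtoC (IZR (fst q)))))
               (Cmul (snd (v p)) (Cmul Ci (RtoC (IZR (snd q))))))
         (comp (v q))).

(** ||f||_{L^2}^2 = int_{T^2} |f|^2 = (2 pi)^2 sum_k |f^_k|^2, for f supported
    in the box |k|_oo <= n *)
Definition L2sq (n : nat) (w : mode -> cpx) : R :=
  (2 * PI) ^ 2 * box_sum n (fun k => Cnorm2 (w k)).

(** ||e^{s |grad|} f||_{L^2}^2, for f supported in the box |k|_oo <= n *)
Definition expL2sq (n : nat) (s : R) (w : mode -> cpx) : R :=
  (2 * PI) ^ 2 * box_sum n (fun k => Cnorm2 (Cscal (exp (s * knorm k)) (w k))).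

(** u0 in L^2(T^2;R^2), div u0 = 0, mean zero, via its Fourier coefficients *)
Definition u0_admissible (u0h : vfield) : Prop :=
  (forall k, u0h (kneg k) = (Cconj (fst (u0h k)), Cconj (snd (u0h k)))) /\
  (forall k, Cadd (Cscal (IZR (fst k)) (fst (u0h k)))
                  (Cscal (IZR (snd k)) (snd (u0h k))) = C0) /\
  u0h (0%Z, 0%Z) = (C0, C0) /\
  (exists M, forall n, box_sum n (fun k => Cnorm2 (fst (u0h k)) + Cnorm2 (snd (u0h k))) <= M).

Definition R_admissible (m : R) (Rhat : mode -> R) : Prop :=
  (forall k, 0 <= Rhat k <= 1) /\
  (forall k, knorm k <= m -> Rhat k = 1) /\
  (forall k, 2 * m < knorm k -> Rhat k = 0).

Definition K_admissible (a : nat) (Kt : mode -> cpx) : Prop :=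
  (forall k, in_boxb (Z.of_nat a) k = false -> Kt k = C0) /\
  (forall k, Cnorm2 (Kt k) <= 1).

Definition has_deriv_C (f : R -> cpx) (t : R) (d : cpx) : Prop :=
  derivable_pt_lim (fun s => fst (f s)) t (fst d) /\
  derivable_pt_lim (fun s => snd (f s)) t (snd d).

(** u (t) = Fourier coefficients of u_N(.,t), p (t) those of p_N(.,t).
    Equation, coefficientwise for every k in Z^2 and every t >= 0:
    d/dt u_k = 1_{|k|_oo<=N} (-(u.grad u)^_k) - i k p_k - eps |k|^2 Q_k u_k,
    with Q_k = 1 - Rhat_k. *)
Definition SV_solution (N : nat) (eps : R) (Rhat : mode -> R) (Kt : mode -> cpx)
  (u0h : vfield) (u : R -> vfield) (p : R -> mode -> cpx) : Prop :=
  (forall t k, 0 <= t ->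
     (k = (0%Z, 0%Z) \/ in_boxb (Z.of_nat N) k = false) -> u t k = (C0, C0)) /\
  (forall t k, 0 <= t ->
     Cadd (Cscal (IZR (fst k)) (fst (u t k))) (Cscal (IZR (snd k)) (snd (u t k))) = C0) /\
  (* initial datum u_N(.,0) = K_{a_N} * u0 *)
  (forall k, u 0 k = (Cmul (Kt k) (fst (u0h k)), Cmul (Kt k) (snd (u0h k)))) /\
  (forall t k, 0 <= t ->
     has_deriv_C (fun s => fst (u s k)) t
       (Cadd (if in_boxb (Z.of_nat N) k then Copp (adv_hat N (u t) fst k) else C0)
         (Cadd (Copp (Cmul Ci (Cscal (IZR (fst k)) (p t k))))
               (Copp (Cscal (eps * knorm2 k * (1 - Rhat k)) (fst (u t k)))))) /\
     has_deriv_C (fun s => snd (u s k)) t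
       (Cadd (if in_boxb (Z.of_nat N) k then Copp (adv_hat N (u t) snd k) else C0)
         (Cadd (Copp (Cmul Ci (Cscal (IZR (snd k)) (p t k))))
               (Copp (Cscal (eps * knorm2 k * (1 - Rhat k)) (snd (u t k))))))).

From Stdlib Require Import Reals ZArith.
From Stdlib Require Import Lra Lia List Permutation.
From Coquelicot Require Complex.
Open Scope R_scope.

(* Let y(t) be the Gevrey-weighted enstrophy ||e^{alpha t |grad|} omega_N(t)||^2.
   Mode by mode, the pressure drops out of the vorticity equation, and Young's
   inequality absorbs both the growth 2 alpha |k| of the weight and the nonlinear
   term into the spectral viscosity eps |k|^2 (1 - R_k); on the low modes
   |k| <= 2 m_N, where the viscosity is switched off, this costs 8 eps^2 m_N^2.
   What is left of the nonlinearity is the weighted l^2 norm of the convolution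
   |u| * |omega|, bounded by Young's convolution inequality (the weight
   e^{alpha t |k|} is submultiplicative) and Cauchy-Schwarz with |u_k| = |omega_k|/|k|,
   which produces sum_{0<|k|<=2N} |k|^-2 <= 2 C log N.  Hence
   y' <= (beta/eps) y + (gamma/eps) y^2, and comparison with the Riccati equation
   (through the quantity e^{-a t} y / (a + b y), nonincreasing along
   subsolutions) gives the bound for as long as its denominator is positive,
   i.e. for t < t*. *)

(** * Finite sums over lists *)

Lemma le_of_sq_le a b : 0 <= b -> a ^ 2 <= b ^ 2 -> a <= b.
Proof. intros Hb Hab. nra. Qed.

Definition lsum {A : Type} (l : list A) (f : A -> R) : R :=
  fold_right (fun x acc => f x + acc) 0 l.

Section ListSums.
Context {A : Type}.
Implicit Types (l : list A) (f g : A -> R).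

Lemma lsum_nil f : lsum nil f = 0.
Proof. reflexivity. Qed.

Lemma lsum_cons x l f : lsum (x :: l) f = f x + lsum l f.
Proof. reflexivity. Qed.

Lemma lsum_app l1 l2 f : lsum (l1 ++ l2) f = lsum l1 f + lsum l2 f.
Proof.
  induction l1 as [|x l1 IH]; simpl app; rewrite ?lsum_cons, ?IH, ?lsum_nil; ring.
Qed.

Lemma lsum_ext l f g : (forall x, In x l -> f x = g x) -> lsum l f = lsum l g.
Proof.
  induction l as [|x l IH]; intros H; [reflexivity|].
  rewrite !lsum_cons, H, IH; [reflexivity | intros y Hy; apply H | ]; simpl; auto.
Qed.

Lemma lsum_le l f g : (forall x, In x l -> f x <= g x) -> lsum l f <= lsum l g.
Proof.
  induction l as [|x l IH]; intros H; rewrite ?lsum_nil, ?lsum_cons; [lra|].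
  assert (f x <= g x) by (apply H; left; reflexivity).
  assert (lsum l f <= lsum l g) by (apply IH; intros; apply H; right; assumption).
  lra.
Qed.

Lemma lsum_plus l f g : lsum l (fun x => f x + g x) = lsum l f + lsum l g.
Proof. induction l as [|x l IH]; rewrite ?lsum_nil, ?lsum_cons, ?IH; ring. Qed.

Lemma lsum_scal l c f : lsum l (fun x => c * f x) = c * lsum l f.
Proof. induction l as [|x l IH]; rewrite ?lsum_nil, ?lsum_cons, ?IH; ring. Qed.

Lemma lsum_zero l : lsum l (fun _ => 0) = 0.
Proof. induction l as [|x l IH]; rewrite ?lsum_nil, ?lsum_cons, ?IH; ring. Qed.

Lemma lsum_nonneg l f : (forall x, In x l -> 0 <= f x) -> 0 <= lsum l f.
Proof. intros H. rewrite <- (lsum_zero l). now apply lsum_le. Qed.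

Lemma lsum_Cauchy_Schwarz l f g :
  lsum l (fun x => f x * g x) ^ 2 <= lsum l (fun x => f x ^ 2) * lsum l (fun x => g x ^ 2).
Proof.
  induction l as [|x l IH]; rewrite ?lsum_nil, ?lsum_cons; [lra|].
  set (S := lsum l (fun x => f x * g x)) in *.
  set (P := lsum l (fun x => f x ^ 2)) in *.
  set (Q := lsum l (fun x => g x ^ 2)) in *.
  assert (HP : 0 <= P) by (apply lsum_nonneg; intros; nra).
  assert (HQ : 0 <= Q) by (apply lsum_nonneg; intros; nra).
  assert (Hcross : 2 * S * (f x * g x) <= P * g x ^ 2 + Q * f x ^ 2).
  { apply le_of_sq_le; [nra|].
    assert (S ^ 2 * (f x ^ 2 * g x ^ 2) <= P * Q * (f x ^ 2 * g x ^ 2))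
      by (apply Rmult_le_compat_r; nra).
    pose proof (pow2_ge_0 (P * g x ^ 2 - Q * f x ^ 2)). nra. }
  nra.
Qed.

Lemma lsum_weighted_Cauchy_Schwarz l w f : (forall x, In x l -> 0 <= w x) ->
  lsum l (fun x => w x * f x) ^ 2 <= lsum l w * lsum l (fun x => w x * f x ^ 2).
Proof.
  intros Hw.
  rewrite (lsum_ext l (fun x => w x * f x) (fun x => sqrt (w x) * (sqrt (w x) * f x))),
    (lsum_ext l w (fun x => sqrt (w x) ^ 2)),
    (lsum_ext l (fun x => w x * f x ^ 2) (fun x => (sqrt (w x) * f x) ^ 2)).
  - apply lsum_Cauchy_Schwarz.
  - intros x Hx. rewrite Rpow_mult_distr, pow2_sqrt by auto. reflexivity.
  - intros x Hx. rewrite pow2_sqrt by auto. reflexivity.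
  - intros x Hx. rewrite <- Rmult_assoc, <- Rsqr_def, Rsqr_sqrt by auto. reflexivity.
Qed.

End ListSums.

Lemma lsum_comm {A B : Type} (l : list A) (l' : list B) (F : A -> B -> R) :
  lsum l (fun x => lsum l' (F x)) = lsum l' (fun y => lsum l (fun x => F x y)).
Proof.
  induction l as [|x l IH].
  - symmetry; apply lsum_zero.
  - rewrite lsum_cons, IH, <- lsum_plus. reflexivity.
Qed.

Lemma lsum_map {A B : Type} (h : A -> B) (l : list A) (f : B -> R) :
  lsum (map h l) f = lsum l (fun x => f (h x)).
Proof. induction l as [|x l IH]; simpl map; rewrite ?lsum_cons, ?IH; reflexivity. Qed.

Lemma lsum_list_prod {A B : Type} (l : list A) (l' : list B) (f : A * B -> R) :
  lsum (list_prod l l') f = lsum l (fun x => lsum l' (fun y => f (x, y))).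
Proof.
  induction l as [|x l IH]; [reflexivity|].
  simpl list_prod. rewrite lsum_app, lsum_map, IH, lsum_cons. reflexivity.
Qed.

Lemma sum_f_R0_lsum (f : nat -> R) n : sum_f_R0 f n = lsum (seq 0 (S n)) f.
Proof.
  induction n as [|n IH]; [cbn; ring|].
  rewrite tech5, IH, (seq_S (S n) 0), lsum_app, lsum_cons, lsum_nil. simpl. ring.
Qed.

Lemma lsum_Permutation {A : Type} (l l' : list A) (f : A -> R) :
  Permutation l l' -> lsum l f = lsum l' f.
Proof.
  induction 1; rewrite ?lsum_cons; lra.
Qed.

Lemma lsum_filter_le {A : Type} (p : A -> bool) (l : list A) (f : A -> R) :
  (forall x, In x l -> 0 <= f x) -> lsum (filter p l) f <= lsum l f.
Proof.
  induction l as [|x l IH]; intros Hf; simpl filter; [lra|].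
  assert (0 <= f x) by (apply Hf; left; reflexivity).
  assert (lsum (filter p l) f <= lsum l f) by (apply IH; intros; apply Hf; right; assumption).
  destruct (p x); rewrite ?lsum_cons; lra.
Qed.

Lemma lsum_filter_eq {A : Type} (p : A -> bool) (l : list A) (f : A -> R) :
  (forall x, In x l -> p x = false -> f x = 0) -> lsum (filter p l) f = lsum l f.
Proof.
  induction l as [|x l IH]; intros Hf; simpl filter; [reflexivity|].
  assert (IH' : lsum (filter p l) f = lsum l f)
    by (apply IH; intros; apply Hf; [right|]; assumption).
  destruct (p x) eqn:Hp; rewrite ?lsum_cons, IH'; [reflexivity|].
  rewrite Hf; [ring | left; reflexivity | assumption].
Qed.

Section Reindexing.
Context {A : Type} (eqd : forall a b : A, {a = b} + {a <> b}).

(* The common part of [l] and [l2] appears once in each list, so it can be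
   matched up by a permutation. *)
Lemma lsum_incl_le (l l2 : list A) (f : A -> R) :
  NoDup l -> NoDup l2 -> (forall x, In x l2 -> 0 <= f x) ->
  (forall x, In x l -> f x = 0 \/ In x l2) -> lsum l f <= lsum l2 f.
Proof.
  intros Hl Hl2 Hf Hsupp.
  set (in2 := fun x => if in_dec eqd x l2 then true else false).
  set (in1 := fun x => if in_dec eqd x l then true else false).
  rewrite <- (lsum_filter_eq in2 l f).
  - rewrite (lsum_Permutation _ (filter in1 l2)).
    + apply lsum_filter_le, Hf.
    + apply NoDup_Permutation; try apply NoDup_filter; try assumption.
      intros x. rewrite !filter_In. unfold in1, in2.
      destruct (in_dec eqd x l), (in_dec eqd x l2); intuition discriminate.
  - intros x Hx. unfold in2. destruct (in_dec eqd x l2); [discriminate|].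
    intros _. destruct (Hsupp x Hx); tauto.
Qed.

Lemma lsum_reindex_le (l l2 : list A) (s : A -> A) (f : A -> R) :
  NoDup l -> NoDup l2 -> FinFun.Injective s -> (forall x, In x l2 -> 0 <= f x) ->
  (forall x, In x l -> f (s x) = 0 \/ In (s x) l2) ->
  lsum l (fun x => f (s x)) <= lsum l2 f.
Proof.
  intros Hl Hl2 Hs Hf Hsupp. rewrite <- lsum_map.
  apply lsum_incl_le; try assumption.
  - apply FinFun.Injective_map_NoDup; assumption.
  - intros y Hy. apply in_map_iff in Hy as [x [<- Hx]]. apply Hsupp, Hx.
Qed.

End Reindexing.

Definition zlist (n : nat) : list Z :=
  map (fun i => (Z.of_nat i - Z.of_nat n)%Z) (seq 0 (S (2 * n))).
Definition box_list (n : nat) : list mode := list_prod (zlist n) (zlist n).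

Lemma box_sum_lsum n f : box_sum n f = lsum (box_list n) f.
Proof.
  unfold box_sum, sumZ, box_list, zlist.
  rewrite (@lsum_list_prod Z Z), sum_f_R0_lsum, lsum_map.
  apply lsum_ext; intros. rewrite sum_f_R0_lsum, lsum_map. reflexivity.
Qed.

Lemma in_zlist n a : In a (zlist n) <-> (- Z.of_nat n <= a <= Z.of_nat n)%Z.
Proof.
  unfold zlist. rewrite in_map_iff. split.
  - intros [i [<- Hi]]. apply in_seq in Hi. lia.
  - intros H. exists (Z.to_nat (a + Z.of_nat n)). rewrite in_seq. lia.
Qed.

Lemma in_box_list n k : In k (box_list n) <-> in_boxb (Z.of_nat n) k = true.
Proof.
  destruct k as [a b]. unfold box_list, in_boxb.
  rewrite (@in_prod_iff Z Z), !in_zlist, Bool.andb_true_iff, !Z.leb_le. simpl. lia.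
Qed.

Lemma NoDup_list_prod {A B : Type} (l : list A) (l' : list B) :
  NoDup l -> NoDup l' -> NoDup (list_prod l l').
Proof.
  induction 1 as [|x l Hx Hl IH]; intros Hl'; simpl; [constructor|].
  apply NoDup_app; auto.
  - apply FinFun.Injective_map_NoDup; [intros y y' E; now inversion E | assumption].
  - intros [x' y] Hin Hin'. apply in_map_iff in Hin as [y' [E _]]. inversion E; subst.
    apply in_prod_iff in Hin'. tauto.
Qed.

Lemma NoDup_box_list n : NoDup (box_list n).
Proof.
  assert (Hz : NoDup (zlist n)).
  { apply FinFun.Injective_map_NoDup; [intros i j E; lia | apply seq_NoDup]. }
  apply NoDup_list_prod; exact Hz.
Qed.

Definition mode_eq_dec (a b : mode) : {a = b} + {a <> b}.
Proof. decide equality; apply Z.eq_dec. Defined.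

Lemma box_convolution_le N (b c : mode -> R) :
  (forall p, 0 <= b p) -> (forall j, ~ In j (box_list N) -> c j = 0) ->
  lsum (box_list N) (fun k => lsum (box_list N) (fun p => b p * c (ksub k p)) ^ 2)
  <= lsum (box_list N) b ^ 2 * lsum (box_list N) (fun j => c j ^ 2).
Proof.
  intros Hb Hc. set (L := box_list N).
  assert (HSb : 0 <= lsum L b) by (apply lsum_nonneg; auto).
  assert (Hshift : forall p, lsum L (fun k => c (ksub k p) ^ 2) <= lsum L (fun j => c j ^ 2)).
  { intros p. apply (lsum_reindex_le mode_eq_dec L L (fun k => ksub k p) (fun j => c j ^ 2)).
    - apply NoDup_box_list.
    - apply NoDup_box_list.
    - intros [x1 x2] [y1 y2] E. unfold ksub in E; simpl in E. injection E. intros. f_equal; lia.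
    - intros; apply pow2_ge_0.
    - intros k _. destruct (in_dec mode_eq_dec (ksub k p) L) as [|Hout]; [now right|].
      left. rewrite Hc by assumption. ring. }
  apply Rle_trans with (lsum L (fun k => lsum L b * lsum L (fun p => b p * c (ksub k p) ^ 2))).
  { apply lsum_le. intros k _. apply lsum_weighted_Cauchy_Schwarz. auto. }
  rewrite lsum_scal, lsum_comm.
  set (Sc := lsum L (fun j => c j ^ 2)).
  replace (lsum L b ^ 2 * Sc) with (lsum L b * lsum L (fun p => Sc * b p))
    by (rewrite lsum_scal; ring).
  apply Rmult_le_compat_l; [assumption|].
  apply lsum_le. intros p _. rewrite lsum_scal, Rmult_comm. apply Rmult_le_compat_r; auto.
Qed.

Definition cmod (z : cpx) : R := sqrt (Cnorm2 z).

Definition cdot (z w : cpx) : R := fst z * fst w + snd z * snd w.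

Lemma Cnorm2_ge0 z : 0 <= Cnorm2 z.
Proof. unfold Cnorm2; nra. Qed.

Lemma Cnorm2_scal r z : Cnorm2 (Cscal r z) = r ^ 2 * Cnorm2 z.
Proof. unfold Cnorm2, Cscal; simpl; ring. Qed.

Lemma cmod_ge0 z : 0 <= cmod z.
Proof. apply sqrt_pos. Qed.

Lemma cmod_sq z : cmod z ^ 2 = Cnorm2 z.
Proof. apply pow2_sqrt, Cnorm2_ge0. Qed.

Lemma cmod_mul z w : cmod (Cmul z w) = cmod z * cmod w.
Proof. exact (Complex.Cmod_mult z w). Qed.

Lemma cmod_add z w : cmod (Cadd z w) <= cmod z + cmod w.
Proof. exact (Complex.Cmod_triangle z w). Qed.

Lemma cmod_opp z : cmod (Copp z) = cmod z.
Proof. exact (Complex.Cmod_opp z). Qed.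

Lemma cmod_C0 : cmod C0 = 0.
Proof. exact Complex.Cmod_0. Qed.

Lemma cmod_RtoC r : cmod (RtoC r) = Rabs r.
Proof. exact (Complex.Cmod_R r). Qed.

Lemma cmod_Ci : cmod Ci = 1.
Proof. unfold cmod, Cnorm2, Ci. simpl. rewrite Rmult_0_l, !Rmult_1_l, Rplus_0_l. apply sqrt_1. Qed.

Lemma cmod_scal r z : cmod (Cscal r z) = Rabs r * cmod z.
Proof.
  replace (Cscal r z) with (Cmul (RtoC r) z)
    by (unfold Cmul, Cscal, RtoC; simpl; f_equal; ring).
  rewrite cmod_mul, cmod_RtoC. reflexivity.
Qed.

Lemma cmod_lsum {A : Type} (l : list A) (f : A -> cpx) :
  cmod (lsum l (fun x => fst (f x)), lsum l (fun x => snd (f x))) <= lsum l (fun x => cmod (f x)).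
Proof.
  induction l as [|x l IH]; rewrite ?lsum_cons.
  - rewrite !lsum_nil. change (0, 0) with C0. rewrite cmod_C0. lra.
  - pose proof (cmod_add (f x) (lsum l (fun x => fst (f x)), lsum l (fun x => snd (f x)))).
    unfold Cadd in *; simpl in *. lra.
Qed.

Lemma cmod_Cbox_sum n (f : mode -> cpx) :
  cmod (Cbox_sum n f) <= box_sum n (fun k => cmod (f k)).
Proof. unfold Cbox_sum. rewrite !box_sum_lsum. apply cmod_lsum. Qed.

Lemma cdot_le_cmod z w : cdot z w <= cmod z * cmod w.
Proof.
  apply le_of_sq_le; [apply Rmult_le_pos; apply cmod_ge0|].
  rewrite Rpow_mult_distr, !cmod_sq. unfold cdot, Cnorm2.
  pose proof (pow2_ge_0 (fst z * snd w - snd z * fst w)). nra.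
Qed.

Lemma exp_le_exp x y : x <= y -> exp x <= exp y.
Proof. intros [H | ->]; [apply Rlt_le, exp_increasing, H | lra]. Qed.

Lemma derivable_pt_lim_exp_lin c t :
  derivable_pt_lim (fun s => exp (c * s)) t (c * exp (c * t)).
Proof.
  assert (Hlin : derivable_pt_lim (fun s => c * s) t c).
  { apply (derivable_pt_lim_ext (mult_real_fct c id)); [reflexivity|].
    rewrite <- (Rmult_1_r c) at 2. apply derivable_pt_lim_scal, derivable_pt_lim_id. }
  rewrite Rmult_comm.
  exact (derivable_pt_lim_comp _ exp t _ _ Hlin (derivable_pt_lim_exp _)).
Qed.

Lemma derivable_pt_lim_lsum {A : Type} (l : list A) (F : R -> A -> R) (dF : A -> R) t :
  (forall x, In x l -> derivable_pt_lim (fun s => F s x) t (dF x)) ->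
  derivable_pt_lim (fun s => lsum l (F s)) t (lsum l dF).
Proof.
  induction l as [|x l IH]; intros H.
  - apply derivable_pt_lim_const.
  - apply (derivable_pt_lim_plus (fun s => F s x) (fun s => lsum l (F s))).
    + apply H; left; reflexivity.
    + apply IH; intros; apply H; right; assumption.
Qed.

Lemma has_deriv_C_weighted_norm (w : R -> cpx) c t dw : has_deriv_C w t dw ->
  derivable_pt_lim (fun s => Cnorm2 (Cscal (exp (c * s)) (w s))) t
    (2 * c * exp (c * t) ^ 2 * Cnorm2 (w t) + 2 * exp (c * t) ^ 2 * cdot (w t) dw).
Proof.
  intros [H1 H2].
  assert (Hsq : forall f df, derivable_pt_lim f t df ->
    derivable_pt_lim (fun s => (exp (c * s) * f s) ^ 2) t
      (2 * (exp (c * t) * f t) * (c * exp (c * t) * f t + exp (c * t) * df))).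
  { intros f df Hf.
    apply (derivable_pt_lim_ext (fun s => (exp (c * s) * f s) * (exp (c * s) * f s))).
    { intros z. ring. }
    replace (2 * _ * _) with
      ((c * exp (c * t) * f t + exp (c * t) * df) * (exp (c * t) * f t)
       + (exp (c * t) * f t) * (c * exp (c * t) * f t + exp (c * t) * df)) by ring.
    pose proof (derivable_pt_lim_mult _ _ t _ _ (derivable_pt_lim_exp_lin c t) Hf) as Hp.
    exact (derivable_pt_lim_mult _ _ t _ _ Hp Hp). }
  unfold Cnorm2, Cscal, cdot; simpl.
  replace (_ + 2 * exp (c * t) ^ 2 * _) with
    (2 * (exp (c * t) * fst (w t)) * (c * exp (c * t) * fst (w t) + exp (c * t) * fst dw)
     + 2 * (exp (c * t) * snd (w t)) * (c * exp (c * t) * snd (w t) + exp (c * t) * snd dw))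
    by ring.
  exact (derivable_pt_lim_plus _ _ t _ _ (Hsq _ _ H1) (Hsq _ _ H2)).
Qed.

Lemma knorm2_eq k : knorm2 k = IZR (fst k) ^ 2 + IZR (snd k) ^ 2.
Proof. unfold knorm2. rewrite plus_IZR, !mult_IZR. ring. Qed.

Lemma knorm2_ge0 k : 0 <= knorm2 k.
Proof. rewrite knorm2_eq. nra. Qed.

Lemma knorm_ge0 k : 0 <= knorm k.
Proof. apply sqrt_pos. Qed.

Lemma knorm_sq k : knorm k ^ 2 = knorm2 k.
Proof. apply pow2_sqrt, knorm2_ge0. Qed.

Lemma knorm_cmod k : knorm k = cmod (IZR (fst k), IZR (snd k)).
Proof. unfold knorm, cmod, Cnorm2. rewrite knorm2_eq. reflexivity. Qed.

Lemma knorm_ksub_le k p : knorm k <= knorm p + knorm (ksub k p).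
Proof.
  rewrite !knorm_cmod.
  replace (IZR (fst k), IZR (snd k)) with
    (Cadd (IZR (fst p), IZR (snd p)) (IZR (fst (ksub k p)), IZR (snd (ksub k p)))).
  - apply cmod_add.
  - unfold Cadd, ksub; simpl. rewrite !minus_IZR. f_equal; ring.
Qed.

Lemma Rabs_sum_le_sqrt2_knorm k :
  Rabs (IZR (fst k)) + Rabs (IZR (snd k)) <= sqrt 2 * knorm k.
Proof.
  apply le_of_sq_le; [apply Rmult_le_pos; [apply sqrt_pos | apply knorm_ge0]|].
  rewrite Rpow_mult_distr, pow2_sqrt, knorm_sq, knorm2_eq by lra.
  rewrite <- (pow2_abs (IZR (fst k))), <- (pow2_abs (IZR (snd k))).
  pose proof (pow2_ge_0 (Rabs (IZR (fst k)) - Rabs (IZR (snd k)))). nra.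
Qed.

Definition curl_at (k : mode) (a : cpx * cpx) : cpx :=
  Cmul Ci (Cadd (Cscal (IZR (fst k)) (snd a)) (Cscal (- IZR (snd k)) (fst a))).

Definition div_free_at (k : mode) (a : cpx * cpx) : Prop :=
  Cadd (Cscal (IZR (fst k)) (fst a)) (Cscal (IZR (snd k)) (snd a)) = C0.

Definition vmod (a : cpx * cpx) : R := sqrt (Cnorm2 (fst a) + Cnorm2 (snd a)).

Lemma vmod_ge0 a : 0 <= vmod a.
Proof. apply sqrt_pos. Qed.

Lemma cmod_fst_le_vmod a : cmod (fst a) <= vmod a.
Proof. apply sqrt_le_1; pose proof (Cnorm2_ge0 (fst a)); pose proof (Cnorm2_ge0 (snd a)); lra. Qed.

Lemma cmod_snd_le_vmod a : cmod (snd a) <= vmod a.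
Proof. apply sqrt_le_1; pose proof (Cnorm2_ge0 (fst a)); pose proof (Cnorm2_ge0 (snd a)); lra. Qed.

Lemma derivable_pt_lim_lin2 f g c1 c2 t a b :
  derivable_pt_lim f t a -> derivable_pt_lim g t b ->
  derivable_pt_lim (fun s => c1 * f s + c2 * g s) t (c1 * a + c2 * b).
Proof.
  intros Hf Hg.
  exact (derivable_pt_lim_plus _ _ t _ _ (derivable_pt_lim_scal _ c1 t _ Hf)
           (derivable_pt_lim_scal _ c2 t _ Hg)).
Qed.

Lemma has_deriv_C_curl_at k (a : R -> cpx * cpx) t d1 d2 :
  has_deriv_C (fun s => fst (a s)) t d1 -> has_deriv_C (fun s => snd (a s)) t d2 ->
  has_deriv_C (fun s => curl_at k (a s)) t (curl_at k (d1, d2)).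
Proof.
  intros [A1 B1] [A2 B2]. split.
  - apply (derivable_pt_lim_ext
      (fun s => - IZR (fst k) * snd (snd (a s)) + IZR (snd k) * snd (fst (a s))));
      [intros; simpl; ring|].
    replace (fst (curl_at k (d1, d2))) with (- IZR (fst k) * snd d2 + IZR (snd k) * snd d1)
      by (simpl; ring).
    apply derivable_pt_lim_lin2; assumption.
  - apply (derivable_pt_lim_ext
      (fun s => IZR (fst k) * fst (snd (a s)) + - IZR (snd k) * fst (fst (a s))));
      [intros; simpl; ring|].
    replace (snd (curl_at k (d1, d2))) with (IZR (fst k) * fst d2 + - IZR (snd k) * fst d1)
      by (simpl; ring).
    apply derivable_pt_lim_lin2; assumption.
Qed.

(* Lagrange's identity, using [k . u_k = 0]. *)
Lemma cmod_curl_at_div_free k a : div_free_at k a -> cmod (curl_at k a) = knorm k * vmod a.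
Proof.
  unfold div_free_at, knorm, vmod, cmod. intros H. rewrite <- sqrt_mult
    by (apply knorm2_ge0
        || (pose proof (Cnorm2_ge0 (fst a)); pose proof (Cnorm2_ge0 (snd a)); lra)).
  f_equal. rewrite knorm2_eq.
  destruct a as [[a1 b1] [a2 b2]]. unfold Cadd, Cscal, C0 in H; simpl in H.
  injection H as H1 H2. unfold curl_at, Cnorm2, Cmul, Cadd, Cscal, Ci; simpl.
  transitivity ((IZR (fst k) * b2 - IZR (snd k) * b1) ^ 2
    + (IZR (fst k) * a2 - IZR (snd k) * a1) ^ 2
    + (IZR (fst k) * a1 + IZR (snd k) * a2) ^ 2 + (IZR (fst k) * b1 + IZR (snd k) * b2) ^ 2).
  - rewrite H1, H2. ring.
  - ring.
Qed.

Lemma cmod_curl_at_le k a M : cmod (fst a) <= M -> cmod (snd a) <= M ->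
  cmod (curl_at k a) <= sqrt 2 * knorm k * M.
Proof.
  intros H1 H2. unfold curl_at. rewrite cmod_mul, cmod_Ci, Rmult_1_l.
  eapply Rle_trans; [apply cmod_add|]. rewrite !cmod_scal, Rabs_Ropp.
  pose proof (Rabs_sum_le_sqrt2_knorm k).
  pose proof (Rabs_pos (IZR (fst k))). pose proof (Rabs_pos (IZR (snd k))).
  pose proof (cmod_ge0 (fst a)). nra.
Qed.

Lemma cmod_advection_symbol_le (a : cpx * cpx) (q : mode) :
  cmod (Cadd (Cmul (fst a) (Cmul Ci (RtoC (IZR (fst q)))))
             (Cmul (snd a) (Cmul Ci (RtoC (IZR (snd q)))))) <= vmod a * knorm q.
Proof.
  eapply Rle_trans; [apply cmod_add|].
  rewrite !cmod_mul, !cmod_Ci, !cmod_RtoC, !Rmult_1_l, knorm_cmod.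
  replace (vmod a) with (cmod (cmod (fst a), cmod (snd a)))
    by (unfold vmod, cmod at 1, Cnorm2; simpl fst; simpl snd; rewrite !cmod_sq; reflexivity).
  replace (cmod (IZR (fst q), IZR (snd q))) with (cmod (Rabs (IZR (fst q)), Rabs (IZR (snd q))))
    by (unfold cmod, Cnorm2; cbn [fst snd]; rewrite !pow2_abs; reflexivity).
  apply (cdot_le_cmod (cmod (fst a), cmod (snd a)) (Rabs (IZR (fst q)), Rabs (IZR (snd q)))).
Qed.

(* The box |k|_oo <= N lies in the disc |k| <= 2N, and the junk value [/ 0 = 0]
   makes the mode k = 0 contribute nothing. *)
Lemma box_inv_sq_le N : lsum (box_list N) (fun p => (/ knorm p) ^ 2) <= sum_inv_sq (2 * N).
Proof.
  unfold sum_inv_sq. rewrite box_sum_lsum. erewrite lsum_ext.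
  - apply (lsum_reindex_le mode_eq_dec (box_list N) (box_list (2 * N)) (fun k => k));
      [apply NoDup_box_list | apply NoDup_box_list | intros x y E; exact E | | ].
    + intros j _. destruct (_ && _)%bool eqn:Hj; [|lra].
      apply Rlt_le, Rinv_0_lt_compat.
      rewrite Bool.andb_true_iff, Z.ltb_lt in Hj. apply IZR_lt. lia.
    + intros k Hk. right. rewrite in_box_list in *. unfold in_boxb in *.
      rewrite Bool.andb_true_iff, !Z.leb_le in *. lia.
  - intros [a b] Hk. rewrite in_box_list in Hk. unfold in_boxb in Hk.
    rewrite Bool.andb_true_iff, !Z.leb_le in Hk. simpl in Hk. simpl fst; simpl snd.
    unfold knorm. rewrite pow_inv, pow2_sqrt by apply knorm2_ge0.
    destruct (Z.eq_dec (a * a + b * b) 0) as [E | E].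
    + unfold knorm2; simpl. rewrite E, Rinv_0. reflexivity.
    + replace (_ && _)%bool with true; [reflexivity|].
      symmetry. rewrite Bool.andb_true_iff, Z.ltb_lt, Z.leb_le. nia.
Qed.

(** * The nonlinear term and the energy balance of one mode *)

Definition adv_majorant (N : nat) (v : vfield) (k : mode) : R :=
  box_sum N (fun p => vmod (v p) * cmod (curl_hat v (ksub k p))).

Lemma adv_majorant_ge0 N v k : 0 <= adv_majorant N v k.
Proof.
  unfold adv_majorant. rewrite box_sum_lsum. apply lsum_nonneg. intros.
  apply Rmult_le_pos; [apply vmod_ge0 | apply cmod_ge0].
Qed.

Lemma cmod_adv_hat_le N (v : vfield) (comp : cpx * cpx -> cpx) k :
  (forall a, cmod (comp a) <= vmod a) -> (forall q, div_free_at q (v q)) ->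
  cmod (adv_hat N v comp k) <= adv_majorant N v k.
Proof.
  intros Hcomp Hdiv. unfold adv_hat, adv_majorant.
  eapply Rle_trans; [apply cmod_Cbox_sum|]. rewrite !box_sum_lsum.
  apply lsum_le. intros p _. cbv zeta. rewrite cmod_mul.
  change (curl_hat v (ksub k p)) with (curl_at (ksub k p) (v (ksub k p))).
  rewrite cmod_curl_at_div_free by apply Hdiv.
  pose proof (cmod_advection_symbol_le (v p) (ksub k p)).
  pose proof (Hcomp (v (ksub k p))). pose proof (cmod_ge0 (comp (v (ksub k p)))).
  pose proof (vmod_ge0 (v p)). pose proof (knorm_ge0 (ksub k p)).
  apply Rle_trans with (vmod (v p) * knorm (ksub k p) * vmod (v (ksub k p)));
    [apply Rmult_le_compat; auto; apply cmod_ge0 | right; ring].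
Qed.

Definition nonlin_rhs (N : nat) (v : vfield) (comp : cpx * cpx -> cpx) (k : mode) : cpx :=
  if in_boxb (Z.of_nat N) k then Copp (adv_hat N v comp k) else C0.

(* Right-hand side of the equation for the component [comp] of the velocity;
   [kc] is the matching component of the wave vector. *)
Definition sv_rhs (N : nat) (eps : R) (Rhat : mode -> R) (v : vfield) (P : mode -> cpx)
  (comp : cpx * cpx -> cpx) (kc : mode -> Z) (k : mode) : cpx :=
  Cadd (nonlin_rhs N v comp k)
    (Cadd (Copp (Cmul Ci (Cscal (IZR (kc k)) (P k))))
      (Copp (Cscal (eps * knorm2 k * (1 - Rhat k)) (comp (v k))))).

(* The pressure gradient is curl free, so it drops out. *)
Lemma curl_at_sv_rhs N eps Rhat v P k :
  cdot (curl_hat v k) (curl_at k (sv_rhs N eps Rhat v P fst fst k, sv_rhs N eps Rhat v P snd snd k))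
  = cdot (curl_hat v k) (curl_at k (nonlin_rhs N v fst k, nonlin_rhs N v snd k))
    - eps * knorm2 k * (1 - Rhat k) * Cnorm2 (curl_hat v k).
Proof.
  unfold sv_rhs, curl_hat, curl_at, cdot, Cnorm2, Cmul, Cadd, Cscal, Copp, Ci.
  cbn [fst snd]. ring.
Qed.

Lemma cmod_nonlin_rhs_le N v comp k :
  (forall a, cmod (comp a) <= vmod a) -> (forall q, div_free_at q (v q)) ->
  cmod (nonlin_rhs N v comp k) <= adv_majorant N v k.
Proof.
  intros Hcomp Hdiv. unfold nonlin_rhs. destruct (in_boxb (Z.of_nat N) k).
  - rewrite cmod_opp. apply cmod_adv_hat_le; assumption.
  - rewrite cmod_C0. apply adv_majorant_ge0.
Qed.

(* Young's inequality for each of the three terms; the dissipation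
   [eps |k|^2 (1 - R_k)] absorbs the growth except on the modes [|k| <= 2m]
   where it is switched off. *)
Lemma mode_energy_inequality al eps m kn r w M nl :
  0 < al -> 0 < eps -> 0 <= m -> 0 <= kn -> 0 <= r <= 1 -> (r <> 0 -> kn <= 2 * m) ->
  0 <= w -> nl <= sqrt 2 * kn * w * M ->
  2 * (al * kn) * w ^ 2 + 2 * (nl - eps * kn ^ 2 * (1 - r) * w ^ 2)
  <= (al ^ 2 + 8 * eps ^ 2 * m ^ 2) / eps * w ^ 2 + 2 / eps * M ^ 2.
Proof.
  intros Hal Heps Hm Hkn Hr Hsupp Hw Hnl.
  assert (Hlin : 2 * al * kn * eps <= al ^ 2 + eps ^ 2 * kn ^ 2)
    by (pose proof (pow2_ge_0 (al - eps * kn)); nra).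
  assert (Hlow : r * kn ^ 2 <= 4 * m ^ 2).
  { destruct (Req_dec r 0) as [-> | Hr0]; [nra|].
    specialize (Hsupp Hr0). nra. }
  assert (Hnonlin : 2 * eps * nl <= eps ^ 2 * kn ^ 2 * w ^ 2 + 2 * M ^ 2).
  { pose proof (pow2_ge_0 (eps * kn * w - sqrt 2 * M)).
    assert (Hs2 : sqrt 2 ^ 2 = 2) by (apply pow2_sqrt; lra).
    nra. }
  apply (Rmult_le_reg_l eps); [assumption|].
  replace (eps * (_ / eps * w ^ 2 + 2 / eps * M ^ 2))
    with ((al ^ 2 + 8 * eps ^ 2 * m ^ 2) * w ^ 2 + 2 * M ^ 2) by (field; lra).
  assert (Hw2 : 0 <= w ^ 2) by nra.
  assert (2 * al * kn * eps * w ^ 2 <= (al ^ 2 + eps ^ 2 * kn ^ 2) * w ^ 2)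
    by (apply Rmult_le_compat_r; assumption).
  assert (r * kn ^ 2 * w ^ 2 <= 4 * m ^ 2 * w ^ 2) by (apply Rmult_le_compat_r; assumption).
  assert (eps ^ 2 * (r * kn ^ 2 * w ^ 2) <= eps ^ 2 * (4 * m ^ 2 * w ^ 2))
    by (apply Rmult_le_compat_l; nra).
  nra.
Qed.

Definition mode_rate (N : nat) (eps : R) (Rhat : mode -> R) (al t : R) (v : vfield)
  (P : mode -> cpx) (k : mode) : R :=
  2 * (al * knorm k) * exp (al * t * knorm k) ^ 2 * Cnorm2 (curl_hat v k)
  + 2 * exp (al * t * knorm k) ^ 2
      * cdot (curl_hat v k)
          (curl_at k (sv_rhs N eps Rhat v P fst fst k, sv_rhs N eps Rhat v P snd snd k)).

Lemma mode_rate_le N eps m Rhat al t v P k :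
  0 < al -> 0 < eps -> 0 <= m -> R_admissible m Rhat -> (forall q, div_free_at q (v q)) ->
  mode_rate N eps Rhat al t v P k
  <= exp (al * t * knorm k) ^ 2
     * ((al ^ 2 + 8 * eps ^ 2 * m ^ 2) / eps * Cnorm2 (curl_hat v k)
        + 2 / eps * adv_majorant N v k ^ 2).
Proof.
  intros Hal Heps Hm [HR01 [_ HRout]] Hdiv. unfold mode_rate. rewrite curl_at_sv_rhs.
  set (nl := cdot _ (curl_at k (nonlin_rhs N v fst k, nonlin_rhs N v snd k))).
  rewrite <- cmod_sq, <- knorm_sq.
  replace (2 * _ * _ * _ + _) with
    (exp (al * t * knorm k) ^ 2 * (2 * (al * knorm k) * cmod (curl_hat v k) ^ 2
      + 2 * (nl - eps * knorm k ^ 2 * (1 - Rhat k) * cmod (curl_hat v k) ^ 2))) by ring.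
  apply Rmult_le_compat_l; [apply pow2_ge_0|].
  apply mode_energy_inequality; auto using knorm_ge0, cmod_ge0.
  - intros Hr. destruct (Rle_dec (knorm k) (2 * m)) as [|Hgt]; [assumption|].
    exfalso. apply Hr, HRout. lra.
  - unfold nl. eapply Rle_trans; [apply cdot_le_cmod|].
    apply Rle_trans with (cmod (curl_hat v k) * (sqrt 2 * knorm k * adv_majorant N v k));
      [|right; ring].
    apply Rmult_le_compat_l; [apply cmod_ge0|].
    apply cmod_curl_at_le; simpl; apply cmod_nonlin_rhs_le;
      auto using cmod_fst_le_vmod, cmod_snd_le_vmod.
Qed.

(** * The Gevrey-weighted enstrophy *)

Definition weighted_enstrophy (N : nat) (s : R) (v : vfield) : R :=
  box_sum N (fun k => Cnorm2 (Cscal (exp (s * knorm k)) (curl_hat v k))).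

Definition box_supported (N : nat) (v : vfield) : Prop :=
  forall k, (k = (0%Z, 0%Z) \/ in_boxb (Z.of_nat N) k = false) -> v k = (C0, C0).

Lemma weighted_enstrophy_lsum N s v : weighted_enstrophy N s v =
  lsum (box_list N) (fun k => (exp (s * knorm k) * cmod (curl_hat v k)) ^ 2).
Proof.
  unfold weighted_enstrophy. rewrite box_sum_lsum. apply lsum_ext. intros k _.
  rewrite Cnorm2_scal, Rpow_mult_distr, cmod_sq. reflexivity.
Qed.

Lemma weighted_enstrophy_ge0 N s v : 0 <= weighted_enstrophy N s v.
Proof. rewrite weighted_enstrophy_lsum. apply lsum_nonneg. intros; apply pow2_ge_0. Qed.

Lemma knorm_eq0 k : knorm k = 0 -> k = (0%Z, 0%Z).
Proof.
  intros H. assert (H2 : knorm2 k = 0) by (rewrite <- knorm_sq, H; ring).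
  rewrite knorm2_eq in H2. destruct k as [a b]; simpl in H2.
  assert (IZR a = 0 /\ IZR b = 0) as [Ha Hb] by (split; nra).
  apply eq_IZR_R0 in Ha, Hb. subst. reflexivity.
Qed.

(* On the support [k <> 0] of a divergence-free field, |u_k| = |k|^-1 |omega_k|;
   Cauchy-Schwarz then brings in the sum of |k|^-2. *)
Lemma weighted_velocity_l1_le N s v :
  box_supported N v -> (forall q, div_free_at q (v q)) ->
  lsum (box_list N) (fun p => exp (s * knorm p) * vmod (v p)) ^ 2
  <= sum_inv_sq (2 * N) * weighted_enstrophy N s v.
Proof.
  intros Hsupp Hdiv. rewrite weighted_enstrophy_lsum.
  rewrite (lsum_ext _ _ (fun p => / knorm p * (exp (s * knorm p) * cmod (curl_hat v p)))).
  - eapply Rle_trans; [apply lsum_Cauchy_Schwarz|].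
    apply Rmult_le_compat_r; [apply lsum_nonneg; intros; apply pow2_ge_0 | apply box_inv_sq_le].
  - intros p _. destruct (Req_dec (knorm p) 0) as [H0 | Hpos].
    + rewrite (Hsupp p (or_introl (knorm_eq0 p H0))), H0, Rinv_0.
      replace (vmod (C0, C0)) with 0; [ring|].
      unfold vmod; cbn [fst snd].
      replace (Cnorm2 C0 + Cnorm2 C0) with 0 by (unfold Cnorm2, C0; simpl; ring).
      symmetry; apply sqrt_0.
    + change (curl_hat v p) with (curl_at p (v p)).
      rewrite cmod_curl_at_div_free by apply Hdiv. field. exact Hpos.
Qed.

(* The Gevrey weight is submultiplicative along the convolution k = p + (k - p). *)
Lemma weighted_adv_majorant_sq_le N s v :
  0 <= s -> box_supported N v -> (forall q, div_free_at q (v q)) ->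
  box_sum N (fun k => exp (s * knorm k) ^ 2 * adv_majorant N v k ^ 2)
  <= sum_inv_sq (2 * N) * weighted_enstrophy N s v ^ 2.
Proof.
  intros Hs Hsupp Hdiv. rewrite box_sum_lsum. set (L := box_list N).
  set (b := fun p => exp (s * knorm p) * vmod (v p)).
  set (c := fun q => exp (s * knorm q) * cmod (curl_hat v q)).
  assert (Hb : forall p, 0 <= b p)
    by (intros; apply Rmult_le_pos; [apply Rlt_le, exp_pos | apply vmod_ge0]).
  assert (Hc : forall q, 0 <= c q)
    by (intros; apply Rmult_le_pos; [apply Rlt_le, exp_pos | apply cmod_ge0]).
  apply Rle_trans with (lsum L (fun k => lsum L (fun p => b p * c (ksub k p)) ^ 2)).
  { apply lsum_le. intros k _. rewrite <- Rpow_mult_distr. apply pow_incr. split.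
    - apply Rmult_le_pos; [apply Rlt_le, exp_pos | apply adv_majorant_ge0].
    - unfold adv_majorant. rewrite box_sum_lsum, <- lsum_scal. apply lsum_le. intros p _.
      assert (Hw : exp (s * knorm k) <= exp (s * knorm p) * exp (s * knorm (ksub k p))).
      { rewrite <- exp_plus. apply exp_le_exp.
        pose proof (knorm_ksub_le k p). nra. }
      pose proof (vmod_ge0 (v p)). pose proof (cmod_ge0 (curl_hat v (ksub k p))).
      unfold b, c.
      apply Rle_trans with
        (exp (s * knorm p) * exp (s * knorm (ksub k p))
         * (vmod (v p) * cmod (curl_hat v (ksub k p))));
        [apply Rmult_le_compat_r; [nra | exact Hw] | right; ring]. }
  eapply Rle_trans; [apply box_convolution_le; [exact Hb|]|].
  - intros j Hj. unfold c. rewrite in_box_list in Hj.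
    change (curl_hat v j) with (curl_at j (v j)).
    rewrite (Hsupp j (or_intror (Bool.not_true_is_false _ Hj))).
    unfold curl_at. rewrite cmod_mul. cbn [fst snd].
    replace (Cadd _ _) with C0 by (unfold Cadd, Cscal, C0; simpl; f_equal; ring).
    rewrite cmod_C0. ring.
  - fold L. replace (lsum L (fun j => c j ^ 2)) with (weighted_enstrophy N s v)
      by (rewrite weighted_enstrophy_lsum; reflexivity).
    assert (HY := weighted_enstrophy_ge0 N s v).
    replace (sum_inv_sq (2 * N) * weighted_enstrophy N s v ^ 2)
      with (sum_inv_sq (2 * N) * weighted_enstrophy N s v * weighted_enstrophy N s v) by ring.
    apply Rmult_le_compat_r; [exact HY|]. apply weighted_velocity_l1_le; assumption.
Qed.

Lemma enstrophy_rate_le N eps m Rhat al t v P :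
  0 < al -> 0 <= t -> 0 < eps -> 0 <= m -> R_admissible m Rhat ->
  box_supported N v -> (forall q, div_free_at q (v q)) ->
  box_sum N (mode_rate N eps Rhat al t v P)
  <= (al ^ 2 + 8 * eps ^ 2 * m ^ 2) / eps * weighted_enstrophy N (al * t) v
     + 2 / eps * (sum_inv_sq (2 * N) * weighted_enstrophy N (al * t) v ^ 2).
Proof.
  intros Hal Ht Heps Hm HR Hsupp Hdiv.
  assert (Hinv : 0 <= 2 / eps) by (apply Rlt_le, Rdiv_lt_0_compat; lra).
  eapply Rle_trans;
    [|apply Rplus_le_compat_l, Rmult_le_compat_l, weighted_adv_majorant_sq_le; auto; nra].
  unfold weighted_enstrophy. rewrite !box_sum_lsum, <- !lsum_scal, <- lsum_plus.
  apply lsum_le. intros k _. eapply Rle_trans; [apply (mode_rate_le N eps m); assumption|].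
  rewrite Cnorm2_scal. right. ring.
Qed.

Definition gevrey_enstrophy (N : nat) (al : R) (u : R -> vfield) (s : R) : R :=
  expL2sq N (al * s) (curl_hat (u s)).

Definition gevrey_enstrophy_rate (N : nat) (eps : R) (Rhat : mode -> R) (al : R)
  (u : R -> vfield) (p : R -> mode -> cpx) (s : R) : R :=
  (2 * PI) ^ 2 * box_sum N (mode_rate N eps Rhat al s (u s) (p s)).

Lemma gevrey_enstrophy_deriv N eps Rhat Kt u0h u p al t :
  SV_solution N eps Rhat Kt u0h u p -> 0 <= t ->
  derivable_pt_lim (gevrey_enstrophy N al u) t (gevrey_enstrophy_rate N eps Rhat al u p t).
Proof.
  intros (_ & _ & _ & Heq) Ht. unfold gevrey_enstrophy, gevrey_enstrophy_rate, expL2sq.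
  apply derivable_pt_lim_scal with (f := fun s => box_sum N _).
  rewrite box_sum_lsum.
  apply (derivable_pt_lim_ext (fun s => lsum (box_list N)
    (fun k => Cnorm2 (Cscal (exp (al * knorm k * s)) (curl_at k (u s k))))));
    [intros s; rewrite box_sum_lsum; apply lsum_ext; intros k _;
     replace (al * s * knorm k) with (al * knorm k * s) by ring; reflexivity|].
  apply derivable_pt_lim_lsum. intros k _. destruct (Heq t k Ht) as [D1 D2].
  unfold mode_rate. replace (al * t * knorm k) with (al * knorm k * t) by ring.
  exact (has_deriv_C_weighted_norm _ _ t _ (has_deriv_C_curl_at k (fun s => u s k) t _ _ D1 D2)).
Qed.

Lemma gevrey_enstrophy_rate_le N eps m Rhat Kt u0h u p al gamma t :
  SV_solution N eps Rhat Kt u0h u p -> 0 <= t -> 0 < al -> 0 < eps -> 0 <= m ->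
  R_admissible m Rhat -> 2 * sum_inv_sq (2 * N) <= (2 * PI) ^ 2 * gamma ->
  gevrey_enstrophy_rate N eps Rhat al u p t
  <= (al ^ 2 + 8 * eps ^ 2 * m ^ 2) / eps * gevrey_enstrophy N al u t
     + gamma / eps * gevrey_enstrophy N al u t ^ 2.
Proof.
  intros (Hsupp & Hdiv & _) Ht Hal Heps Hm HR Hgamma.
  unfold gevrey_enstrophy_rate, gevrey_enstrophy.
  change (expL2sq N (al * t) (curl_hat (u t)))
    with ((2 * PI) ^ 2 * weighted_enstrophy N (al * t) (u t)).
  assert (HP : 0 < (2 * PI) ^ 2) by (pose proof PI_RGT_0; nra).
  assert (HY := weighted_enstrophy_ge0 N (al * t) (u t)).
  pose proof (enstrophy_rate_le N eps m Rhat al t (u t) (p t) Hal Ht Heps Hm HR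
    (fun k => Hsupp t k Ht) (fun k => Hdiv t k Ht)) as Hrate.
  set (Y := weighted_enstrophy N (al * t) (u t)) in *.
  set (S := sum_inv_sq (2 * N)) in *.
  assert (HSY : 2 * S * Y ^ 2 <= (2 * PI) ^ 2 * gamma * Y ^ 2)
    by (apply Rmult_le_compat_r; [apply pow2_ge_0 | exact Hgamma]).
  apply Rle_trans with ((2 * PI) ^ 2 * ((al ^ 2 + 8 * eps ^ 2 * m ^ 2) / eps * Y
    + 2 * S * Y ^ 2 / eps)); [apply Rmult_le_compat_l; [lra|]; lra|].
  assert (HE : 2 * S * Y ^ 2 / eps <= (2 * PI) ^ 2 * gamma * Y ^ 2 / eps)
    by (apply Rmult_le_compat_r; [apply Rlt_le, Rinv_0_lt_compat |]; lra).
  apply Rle_trans with ((2 * PI) ^ 2 * ((al ^ 2 + 8 * eps ^ 2 * m ^ 2) / eps * Y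
    + (2 * PI) ^ 2 * gamma * Y ^ 2 / eps)); [apply Rmult_le_compat_l; lra | right; field; lra].
Qed.

(** * Riccati comparison *)

Section Riccati.
Variables (y dy : R -> R) (a b : R).
Hypotheses (Ha : 0 < a) (Hb : 0 <= b) (Hy : forall s, 0 <= y s)
  (Hdy : forall s, 0 <= s -> derivable_pt_lim y s (dy s))
  (Hineq : forall s, 0 <= s -> dy s <= a * y s + b * y s ^ 2).

(* [exp (-a s) y / (a + b y)] is exactly the quantity kept constant by the
   equality case [y' = a y + b y^2]. *)
Lemma riccati_quotient_le t : 0 <= t ->
  exp (- a * t) * y t / (a + b * y t) <= y 0 / (a + b * y 0).
Proof.
  intros Ht.
  set (J := fun s => exp (- a * s) * y s / (a + b * y s)).
  set (dJ := fun s => a * exp (- a * s) * (dy s - a * y s - b * y s ^ 2) / (a + b * y s) ^ 2).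
  assert (HJ : J t <= J 0).
  { destruct (Req_dec t 0) as [-> | Ht0]; [lra|].
    assert (Hder : forall c, 0 <= c <= t -> derivable_pt_lim J c (dJ c)).
    { intros c Hc. assert (Hpos : a + b * y c <> 0) by (pose proof (Hy c); nra).
      pose proof (derivable_pt_lim_mult _ _ c _ _
        (derivable_pt_lim_exp_lin (- a) c) (Hdy c ltac:(lra))) as Hnum.
      pose proof (derivable_pt_lim_lin2 (fun _ => 1) y a b c _ _
        (derivable_pt_lim_const 1 c) (Hdy c ltac:(lra))) as Hden.
      pose proof (derivable_pt_lim_div _ _ c _ _ Hnum Hden ltac:(cbv beta; lra)) as Hq.
      apply (derivable_pt_lim_ext _ J) in Hq;
        [|intros s; unfold J, div_fct, mult_fct; f_equal; ring].
      replace (dJ c) with ((((- a * exp (- a * c)) * y c + exp (- a * c) * dy c)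
          * (a * 1 + b * y c) - (a * 0 + b * dy c) * (exp (- a * c) * y c))
          / (a * 1 + b * y c)²) by (unfold dJ, Rsqr; field; lra).
      exact Hq. }
    destruct (MVT_cor2 J dJ 0 t ltac:(lra) Hder) as [c [Hc Hct]].
    assert (dJ c <= 0).
    { assert (HX : dy c - a * y c - b * y c ^ 2 <= 0) by (pose proof (Hineq c ltac:(lra)); lra).
      assert (Hk : 0 <= a * exp (- a * c) / (a + b * y c) ^ 2).
      { unfold Rdiv. apply Rmult_le_pos; [pose proof (exp_pos (- a * c)); nra |].
        apply Rlt_le, Rinv_0_lt_compat, pow_lt. pose proof (Hy c). nra. }
      unfold dJ. replace (a * exp (- a * c) * (dy c - a * y c - b * y c ^ 2) / (a + b * y c) ^ 2)
        with (a * exp (- a * c) / (a + b * y c) ^ 2 * (dy c - a * y c - b * y c ^ 2))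
        by (unfold Rdiv; ring).
      nra. }
    nra. }
  unfold J in HJ. rewrite Rmult_0_r, exp_0, Rmult_1_l in HJ. exact HJ.
Qed.

Lemma riccati_comparison t : 0 <= t -> 0 < 1 - b * y 0 / a * (exp (a * t) - 1) ->
  y t <= y 0 * exp (a * t) / (1 - b * y 0 / a * (exp (a * t) - 1)).
Proof.
  intros Ht HD. pose proof (riccati_quotient_le t Ht) as HJ.
  set (E := exp (a * t)) in *. set (D := 1 - b * y 0 / a * (E - 1)) in *.
  assert (HE : 0 < E) by apply exp_pos.
  replace (exp (- a * t)) with (/ E) in HJ by (unfold E; rewrite <- exp_Ropp; f_equal; ring).
  assert (Hyt := Hy t). assert (Hy0 := Hy 0).
  assert (Hdt : 0 < a + b * y t) by nra. assert (Hd0 : 0 < a + b * y 0) by nra.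
  apply (Rmult_le_compat_r (E * (a + b * y t) * (a + b * y 0))) in HJ;
    [|apply Rlt_le; repeat apply Rmult_lt_0_compat; assumption].
  replace (/ E * y t / (a + b * y t) * (E * (a + b * y t) * (a + b * y 0)))
    with (y t * (a + b * y 0)) in HJ by (field; lra).
  replace (y 0 / (a + b * y 0) * (E * (a + b * y t) * (a + b * y 0)))
    with (E * y 0 * (a + b * y t)) in HJ by (field; lra).
  assert (Hmain : y t * (a * D) <= a * (E * y 0)) by (unfold D; field_simplify; nra).
  apply (Rmult_le_reg_r (a * D)); [nra|].
  replace (y 0 * E / D * (a * D)) with (a * (E * y 0)) by (field; lra). exact Hmain.
Qed.

End Riccati.

Lemma riccati_denominator_pos a b y0 t : 0 < a -> 0 < b -> 0 <= y0 ->
  (y0 = 0 \/ t < / a * ln (1 + a / (b * y0))) -> 0 < 1 - b * y0 / a * (exp (a * t) - 1).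
Proof.
  intros Ha Hb [Hy0 | <-] Ht; [|replace (b * 0 / a * _) with 0 by (unfold Rdiv; ring); lra].
  destruct Ht as [-> | Ht]; [lra|].
  assert (Hq : 0 < a / (b * y0)) by (apply Rdiv_lt_0_compat; nra).
  assert (Hexp : exp (a * t) < 1 + a / (b * y0)).
  { rewrite <- (exp_ln (1 + a / (b * y0))) by lra. apply exp_increasing.
    apply (Rmult_lt_compat_l a) in Ht; [|assumption].
    rewrite <- Rmult_assoc, Rinv_r, Rmult_1_l in Ht by lra. exact Ht. }
  apply (Rmult_lt_compat_l (b * y0 / a)) in Hexp; [|apply Rdiv_lt_0_compat; nra].
  replace (b * y0 / a * (1 + a / (b * y0))) with (b * y0 / a + 1) in Hexp by (field; nra).
  lra.
Qed.

Lemma gevrey_enstrophy_ge0 N al u s : 0 <= gevrey_enstrophy N al u s.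
Proof.
  apply Rmult_le_pos; [pose proof PI_RGT_0; nra | apply weighted_enstrophy_ge0].
Qed.

Lemma gevrey_enstrophy_0 N al u : gevrey_enstrophy N al u 0 = L2sq N (curl_hat (u 0)).
Proof.
  unfold gevrey_enstrophy, expL2sq, L2sq. f_equal. rewrite !box_sum_lsum.
  apply lsum_ext. intros k _. rewrite Cnorm2_scal, Rmult_0_r, Rmult_0_l, exp_0. ring.
Qed.

Lemma sum_inv_sq_double_le Cst N : (2 <= N)%nat -> 0 < Cst ->
  (forall N' : nat, (2 <= N')%nat -> sum_inv_sq N' <= Cst * ln (INR N')) ->
  2 * sum_inv_sq (2 * N) <= (2 * PI) ^ 2 * (Cst * ln (INR N)).
Proof.
  intros HN HC HS.
  assert (HN2 : 2 <= INR N) by (apply (le_INR 2) in HN; simpl in HN; lra).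
  assert (Hln2 : ln 2 <= ln (INR N)).
  { destruct HN2 as [H | E]; [apply Rlt_le, ln_increasing; lra | rewrite E; lra]. }
  assert (Hln2pos : 0 < ln 2) by (rewrite <- ln_1; apply ln_increasing; lra).
  assert (Hdouble : ln (INR (2 * N)) <= 2 * ln (INR N))
    by (rewrite mult_INR, ln_mult by (simpl; lra); replace (INR 2) with 2 by (simpl; lra); lra).
  assert (HS2 := HS (2 * N)%nat ltac:(lia)).
  assert (Hpi : 4 <= (2 * PI) ^ 2) by (pose proof PI_RGT_0; pose proof PI2_3_2; nra).
  assert (Cst * ln (INR (2 * N)) <= Cst * (2 * ln (INR N))) by (apply Rmult_le_compat_l; lra).
  assert (4 * (Cst * ln (INR N)) <= (2 * PI) ^ 2 * (Cst * ln (INR N)))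
    by (apply Rmult_le_compat_r; [apply Rmult_le_pos|]; lra).
  lra.
Qed.

Theorem mainTheorem3 (N : nat) (eps m : R) (a : nat) (Rhat : mode -> R)
  (Kt : mode -> cpx) (u0h : vfield) (u : R -> vfield) (p : R -> mode -> cpx)
  (Cst alpha : R) :
  (2 <= N)%nat -> 0 < eps -> 0 <= m -> (1 <= a <= N)%nat ->
  R_admissible m Rhat -> K_admissible a Kt -> u0_admissible u0h ->
  SV_solution N eps Rhat Kt u0h u p ->
  0 < Cst -> (forall N' : nat, (2 <= N')%nat -> sum_inv_sq N' <= Cst * ln (INR N')) ->
  0 < alpha ->
  let beta := alpha ^ 2 + 8 * eps ^ 2 * m ^ 2 in
  let gamma := Cst * ln (INR N) in
  let y0 := L2sq N (curl_hat (u 0)) in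
  let tstar := eps / beta * ln (1 + beta / (gamma * y0)) in
  forall t : R, 0 <= t -> (y0 = 0 \/ t < tstar) ->
  expL2sq N (alpha * t) (curl_hat (u t))
    <= y0 * exp (beta * t / eps) / (1 - gamma * y0 / beta * (exp (beta * t / eps) - 1)).
Proof.
  intros HN Heps Hm _ HR _ _ HSV HC HS Hal beta gamma y0 tstar t Ht Htstar.
  assert (Hbeta : 0 < beta) by (unfold beta; nra).
  assert (Hgamma : 0 < gamma).
  { apply Rmult_lt_0_compat; [exact HC|]. rewrite <- ln_1. apply ln_increasing; [lra|].
    apply (lt_INR 1) in HN. simpl in HN. lra. }
  assert (Hy0 : gevrey_enstrophy N alpha u 0 = y0) by apply gevrey_enstrophy_0.
  change (expL2sq N (alpha * t) (curl_hat (u t))) with (gevrey_enstrophy N alpha u t).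
  replace (beta * t / eps) with (beta / eps * t) by (field; lra).
  replace (gamma * y0 / beta) with (gamma / eps * y0 / (beta / eps)) by (field; lra).
  rewrite <- Hy0.
  apply (riccati_comparison _ (gevrey_enstrophy_rate N eps Rhat alpha u p)).
  - apply Rdiv_lt_0_compat; assumption.
  - apply Rlt_le, Rdiv_lt_0_compat; assumption.
  - apply gevrey_enstrophy_ge0.
  - intros s Hs. eapply gevrey_enstrophy_deriv; eassumption.
  - intros s Hs. eapply gevrey_enstrophy_rate_le; try eassumption.
    apply sum_inv_sq_double_le; assumption.
  - exact Ht.
  - apply riccati_denominator_pos; try apply Rdiv_lt_0_compat; try assumption.
    + apply gevrey_enstrophy_ge0.
    + rewrite Hy0. destruct (Req_dec y0 0) as [| Hne]; [now left | right].
      destruct Htstar as [| Ht']; [contradiction|].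
      replace (/ (beta / eps)) with (eps / beta) by (field; lra).
      replace (beta / eps / (gamma / eps * y0)) with (beta / (gamma * y0)) by (field; lra).
      exact Ht'.
Qed.
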